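(* For the fully discrete finite element scheme described in the context, with $Q_h^{n-1},Q_h^n$ (and hence, as the scheme preserves these properties, $Q_h^{n+1}$) symmetric and trace-free, define $$E^{n+1}=\frac\sigma2\|D_t^+Q_h^n\|_h^2+\frac{L_1}{2}\|\nabla Q_h^{n+1}\|_{L^2}^2+\frac{L_2+L_3}{2}\|\operatorname{div}Q_h^{n+1}\|_{L^2}^2+\frac12\|r_h^{n+1}\|_h^2.$$ Then $$E^{n+1}-E^n=-\Delta t\|D_t^+Q_h^n\|_h^2-\frac\sigma2\|D_t^+Q_h^n-D_t^+Q_h^{n-1}\|_h^2.$$
   Context: Setting: $\Omega\subset\mathbb{R}^d$ ($d\in\{2,3\}$) bounded domain; constants $L_1>0$, $L_2+L_3\ge0$, $a,b\in\mathbb{R}$, $c>0$, $\sigma>0$, $A_0$ such that $\frac a2\operatorname{tr}(Q^2)-\frac b3\operatorname{tr}(Q^3)+\frac c4\operatorname{tr}^2(Q^2)+A_0>0$ for all symmetric trace-free $Q$. $f(Q)=aQ-b[Q^2-\frac1d\operatorname{tr}(Q^2)I]+c\operatorname{tr}(Q^2)Q$, $r(Q)=\sqrt{2(\frac a2\operatorname{tr}(Q^2)-\frac b3\operatorname{tr}(Q^3)+\frac c4\operatorname{tr}^2(Q^2)+A_0)}$, $P(Q)=f(Q)/r(Q)$; $(\operatorname{div}Q)_j=\sum_k\partial_kQ_{jk}$. Discretization: $\mathfrak T_h$ conforming shape-regular quasi-uniform triangulation, interior nodes $z\in\mathcal N^h$, hat functions $\varphi_z$; $\mathcal S^h$ =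 matrix-valued, $\mathcal T^h$ = scalar continuous piecewise linear functions vanishing on $\partial\Omega$. Mass-lumped inner product $\langle W^1,W^2\rangle_h=\sum_z\gamma_zW^1(z):W^2(z)$, $\gamma_z=\int_\Omega\varphi_z$, norm $\|\cdot\|_h$ (same for scalars). $\langle\alpha(W^1),W^2\rangle_h:=-\int_\Omega\sum_{i,j,k}(\partial_kW^1_{jk}\partial_iW^2_{ij}+\partial_kW^1_{ik}\partial_jW^2_{ij})dx+\frac2d\int_\Omega\sum_{i,j,k,\ell}\partial_\ell W^1_{k\ell}\partial_kW^2_{ij}\delta_{ij}dx$. $D_t^\pm$ forward/backward difference quotients with step $\Delta t$, $g^{n+1/2}=(g^{n+1}+g^n)/2$, $\langle\alpha_h^{n+1/2},\Phi\rangle_h=\frac12(\langle\alpha(Q_h^{n+1}),\Phi\rangle_h+\langle\alpha(Q_h^n),\Phi\rangle_h)$. Scheme: for all $\Phi_h\in\mathcal S^h,\psi_h\in\mathcal T^h$, $\langle D_t^+Q_h^n,\Phi_h\rangle_h=-\sigma\langle D_t^-D_t^+Q_h^n,\Phi_h\rangle_h-L_1\langle\nabla Q_h^{n+1/2},\nabla\Phi_h\rangle_{L^2}+\frac{L_2+L_3}{2}\langle\alpha_h^{n+1/2},\Phi_h\rangle_h-\langle r_h^{n+1/2}P(Q_h^n),\Phi_h\rangle_h$, $\langle r_h^{n+1}-r_h^n,\psi_h\rangle_h=\langle P(Q_h^n):(Q_h^{n+1}-Q_h^n),\psi_h\rangle_h$. *)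

From mathcomp Require Import all_boot all_order all_algebra.
From mathcomp Require Import reals.
Set Implicit Arguments. Unset Strict Implicit. Unset Printing Implicit Defensive.
Import Order.TTheory GRing.Theory Num.Theory.
Local Open Scope ring_scope.

Section FEM.
Variables (R : realType) (d : nat).
(* Mesh data: a finite set of nodes N with coordinates in R^d (row vectors),
   a finite set of elements E (d-simplices), each given by its d+1 vertices. *)
Variables (N E : finType) (coord : N -> 'rV[R]_d) (vert : E -> 'I_d.+1 -> N).

Definition edge_mx (T : E) : 'M[R]_d :=
  \matrix_(k < d, a < d) (coord (vert T (lift ord0 k)) 0 a - coord (vert T ord0) 0 a).

Definition vol (T : E) : R := `|\det (edge_mx T)| / (d`!)%:R.

Definition triangulation : Prop :=
  [/\ forall T, injective (vert T),
      forall T, \det (edge_mx T) != 0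
    & forall z, exists T j, vert T j = z].

(* Constant gradient on T of the barycentric coordinate lambda_j^T
   (the restriction of the hat function of node vert T j to T):
   for x in T,  x - v_0 = sum_k lambda_{k+1}(x) (v_{k+1}-v_0),
   i.e. (lambda_1..lambda_d)(x) = (x - v_0) * edge_mx^{-1}. *)
Definition glam (T : E) (j : 'I_d.+1) (a : 'I_d) : R :=
  match unlift ord0 j with
  | Some k => invmx (edge_mx T) a k
  | None => - \sum_(k < d) invmx (edge_mx T) a k
  end.

Definition verts (T : E) : {set N} := [set vert T j | j : 'I_d.+1].
Definition face (T : E) (j : 'I_d.+1) : {set N} := [set vert T j' | j' in [set~ j]].
Definition bface (F : {set N}) : bool := #|[set T | [exists j, face T j == F]]| == 1%N.
Definition bnode (z : N) : bool := [exists T, exists j, (z \in face T j) && bface (face T j)].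
Definition inode (z : N) : bool := ~~ bnode z.

(* Finite element functions are given by nodal values.
   S^h: matrix-valued P1 functions vanishing on the boundary;
   T^h: scalar-valued P1 functions vanishing on the boundary. *)
Definition in_Sh (W : N -> 'M[R]_d) : Prop := forall z, bnode z -> W z = 0.
Definition in_Th (w : N -> R) : Prop := forall z, bnode z -> w z = 0.

Definition frob (A B : 'M[R]_d) : R := \sum_(i < d) \sum_(j < d) A i j * B i j.

(* gamma_z = int_Omega phi_z = sum_{T containing z} |T| / (d+1) *)
Definition gam (z : N) : R := \sum_(T | z \in verts T) vol T / (d.+1)%:R.

(* mass-lumped inner products and norms *)
Definition ipS (W1 W2 : N -> 'M[R]_d) : R :=
  \sum_(z | inode z) gam z * frob (W1 z) (W2 z).
Definition ipT (w1 w2 : N -> R) : R := \sum_(z | inode z) gam z * (w1 z * w2 z).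
Definition nrmS2 (W : N -> 'M[R]_d) : R := ipS W W.
Definition nrmT2 (w : N -> R) : R := ipT w w.

(* partial derivative d_a W on element T (a constant matrix) *)
Definition dW (W : N -> 'M[R]_d) (T : E) (a : 'I_d) : 'M[R]_d :=
  \sum_(j < d.+1) glam T j a *: W (vert T j).

(* Integrals over Omega of the (elementwise constant) integrands *)
Definition ipgrad (W1 W2 : N -> 'M[R]_d) : R :=
  \sum_T vol T * \sum_(a < d) frob (dW W1 T a) (dW W2 T a).
Definition divnorm2 (W : N -> 'M[R]_d) : R :=
  \sum_T vol T * \sum_(j < d) (\sum_(k < d) dW W T k j k) ^+ 2.
Definition alpha_ip (W1 W2 : N -> 'M[R]_d) : R :=
  \sum_T vol T *
   ( - (\sum_(i < d) \sum_(j < d) \sum_(k < d)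
          (dW W1 T k j k * dW W2 T i i j + dW W1 T k i k * dW W2 T j i j))
     + 2 / d%:R * (\sum_(i < d) \sum_(j < d) \sum_(k < d) \sum_(l < d)
          dW W1 T l k l * dW W2 T k i j * (i == j)%:R)).

End FEM.

Section Bulk.
Variables (R : realType) (d : nat) (a b c A0 : R).
Definition trQ2 (Q : 'M[R]_d) : R := \tr (Q *m Q).
Definition trQ3 (Q : 'M[R]_d) : R := \tr (Q *m Q *m Q).
Definition bulk (Q : 'M[R]_d) : R :=
  a / 2 * trQ2 Q - b / 3 * trQ3 Q + c / 4 * trQ2 Q ^+ 2 + A0.
Definition fQ (Q : 'M[R]_d) : 'M[R]_d :=
  a *: Q - b *: (Q *m Q - (trQ2 Q / d%:R) *: 1%:M) + (c * trQ2 Q) *: Q.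
Definition rQ (Q : 'M[R]_d) : R := Num.sqrt (2 * bulk Q).
Definition PQ (Q : 'M[R]_d) : 'M[R]_d := (rQ Q)^-1 *: fQ Q.
End Bulk.

From Pilot Require Import Defs.
From HB Require Import structures.
From mathcomp Require Import all_boot all_order all_algebra.
From mathcomp Require Import reals.
From mathcomp Require Import ring lra.
Set Implicit Arguments. Unset Strict Implicit. Unset Printing Implicit Defensive.
Import Order.TTheory GRing.Theory Num.Theory.
Local Open Scope ring_scope.

(* Pointwise, every matrix splits Frobenius-orthogonally into its symmetric
   trace-free part and a remainder whose symmetric part is scalar; both
   classes are stable under the finite-difference operators.  Testing the
   scheme with the remainder X of Q_h^{n+1} therefore leaves
   (1/dt + sigma/dt^2) |X|_h^2 + L1/2 |grad X|^2 = 0, so Q_h^{n+1} is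
   symmetric and trace-free.  Testing then with Q_h^{n+1} - Q_h^n, and the
   r-equation with (r_h^{n+1} + r_h^n)/2, turns each term into a difference of
   squares, ((a + b)/2) (a - b) = (a^2 - b^2)/2, or into the polarization
   2 (a - b) a = a^2 - b^2 + (a - b)^2 for the second difference quotient; the
   coupling P(Q_h^n) : (Q_h^{n+1} - Q_h^n) cancels between the two equations,
   and on symmetric trace-free tests alpha is -2 times the L^2 product of
   divergences. *)

Section Frobenius.
Variables (R : realType) (d : nat).
Implicit Types A B C : 'M[R]_d.

Lemma frobE A B : frob A B = \tr (A *m B^T).
Proof.
rewrite /frob /mxtrace; apply: eq_bigr => i _; rewrite mxE.
by apply: eq_bigr => j _; rewrite mxE.
Qed.

Lemma frobC A B : frob A B = frob B A.
Proof. by apply: eq_bigr => i _; apply: eq_bigr => j _; rewrite mulrC. Qed.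

Lemma frobDl A B C : frob (A + B) C = frob A C + frob B C.
Proof. by rewrite !frobE mulmxDl mxtraceD. Qed.

Lemma frobBl A B C : frob (A - B) C = frob A C - frob B C.
Proof. by rewrite !frobE mulmxBl raddfB. Qed.

Lemma frobZl (k : R) A B : frob (k *: A) B = k * frob A B.
Proof. by rewrite !frobE -scalemxAl mxtraceZ. Qed.

Lemma frobDr A B C : frob A (B + C) = frob A B + frob A C.
Proof. by rewrite frobC frobDl !(frobC A). Qed.

Lemma frobBr A B C : frob A (B - C) = frob A B - frob A C.
Proof. by rewrite frobC frobBl !(frobC A). Qed.

Lemma frobZr (k : R) A B : frob A (k *: B) = k * frob A B.
Proof. by rewrite frobC frobZl frobC. Qed.

Lemma frob_trmx A B : frob A B^T = frob A^T B.
Proof. by rewrite !frobE trmxK -mxtrace_tr trmx_mul mxtrace_mulC. Qed.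

Lemma frob1 A : frob A 1%:M = \tr A.
Proof. by rewrite frobE trmx1 mulmx1. Qed.

Lemma frob_ge0 A : 0 <= frob A A.
Proof. by do 2![apply: sumr_ge0 => ? _]; rewrite -expr2 sqr_ge0. Qed.

Lemma frob_eq0 A : frob A A = 0 -> A = 0.
Proof.
have sq_ge0 (x : R) : 0 <= x * x by rewrite -expr2 sqr_ge0.
move=> A0; apply/matrixP => i j; rewrite mxE.
have Ai0 : \sum_j A i j * A i j = 0.
  by apply: (psumr_eq0P _ A0) => // k _; apply: sumr_ge0.
have /eqP : A i j * A i j = 0 by apply: (psumr_eq0P _ Ai0).
by rewrite mulf_eq0 orbb => /eqP.
Qed.

Lemma frob_avg_diff A B :
  frob (2^-1 *: (A + B)) (A - B) = 2^-1 * (frob A A - frob B B).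
Proof. by rewrite frobZl frobDl !frobBr (frobC B A); ring. Qed.

Lemma frob_second_difference (k : R) A B : k != 0 ->
  frob (k^-1 *: (k^-1 *: A - B)) A =
  2^-1 * (frob (k^-1 *: A) (k^-1 *: A) - frob B B
          + frob (k^-1 *: A - B) (k^-1 *: A - B)).
Proof.
move=> k0; rewrite !(frobZl, frobZr, frobBl, frobBr) (frobC B A); field; exact: k0.
Qed.

Definition sym_tracefree : {pred 'M[R]_d} := fun A => (A^T == A) && (\tr A == 0).

Definition scalar_sympart : {pred 'M[R]_d} :=
  fun A => A + A^T == (2 * \tr A / d%:R) *: 1%:M.

Lemma sym_tracefreeP A : reflect (A^T = A /\ \tr A = 0) (A \in sym_tracefree).
Proof. by apply: (iffP andP) => -[/eqP AT /eqP Atr]. Qed.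

Lemma sym_tracefree_submod_closed : submod_closed sym_tracefree.
Proof.
split; first by rewrite unfold_in /= trmx0 mxtrace0 !eqxx.
move=> k A B /sym_tracefreeP[AT At] /sym_tracefreeP[BT Bt]; apply/sym_tracefreeP.
by rewrite linearD linearZ /= AT BT mxtraceD mxtraceZ At Bt mulr0 addr0.
Qed.
HB.instance Definition _ :=
  GRing.isSubmodClosed.Build R 'M[R]_d sym_tracefree sym_tracefree_submod_closed.

Lemma scalar_sympart_submod_closed : submod_closed scalar_sympart.
Proof.
split; first by rewrite unfold_in /= trmx0 mxtrace0 addr0 mulr0 mul0r scale0r.
move=> k A B; rewrite !unfold_in /= => /eqP hA /eqP hB.
rewrite linearD linearZ /= addrACA -scalerDr hA hB mxtraceD mxtraceZ scalerA -scalerDl.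
by apply/eqP; congr (_ *: _); ring.
Qed.
HB.instance Definition _ :=
  GRing.isSubmodClosed.Build R 'M[R]_d scalar_sympart scalar_sympart_submod_closed.

Lemma frob_sym_tracefree_scalar_sympart A B :
  A \in sym_tracefree -> B \in scalar_sympart -> frob A B = 0.
Proof.
case/sym_tracefreeP=> AT At /eqP hB.
have : 2 * frob A B = 0.
  by rewrite mulr2n mulrDl mul1r -{2}AT -frob_trmx -frobDr hB frobZr frob1 At mulr0.
by move/eqP; rewrite mulf_eq0 pnatr_eq0 /= => /eqP.
Qed.

Definition sym_tracefree_part A : 'M[R]_d :=
  2^-1 *: (A + A^T) - (\tr A / d%:R) *: 1%:M.

Lemma sym_tracefree_part0 : sym_tracefree_part 0 = 0.
Proof.
by rewrite /sym_tracefree_part trmx0 addr0 scaler0 mxtrace0 mul0r scale0r subr0.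
Qed.

Hypothesis d_gt0 : (0 < d)%N.

Let d_neq0 : d%:R != 0 :> R. Proof. by rewrite pnatr_eq0 -lt0n. Qed.

Lemma sym_tracefree_part_sym_tracefree A : sym_tracefree_part A \in sym_tracefree.
Proof.
apply/sym_tracefreeP; split.
  by apply/matrixP => i j; rewrite /sym_tracefree_part !mxE (eq_sym j i); ring.
by rewrite /sym_tracefree_part raddfB /= !mxtraceZ mxtraceD mxtrace_tr mxtrace1; field.
Qed.

Lemma sub_sym_tracefree_part_scalar_sympart A :
  A - sym_tracefree_part A \in scalar_sympart.
Proof.
have /sym_tracefreeP[_ tr0] := sym_tracefree_part_sym_tracefree A.
have trB : \tr (A - sym_tracefree_part A) = \tr A by rewrite raddfB /= tr0 subr0.
rewrite unfold_in; apply/eqP; rewrite trB; apply/matrixP => i j.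
by rewrite /sym_tracefree_part !mxE (eq_sym j i); field.
Qed.

Lemma PQ_sym_tracefree (a b c A0 : R) A :
  A \in sym_tracefree -> PQ a b c A0 A \in sym_tracefree.
Proof.
move=> /[dup] Ast /sym_tracefreeP[AT At].
have sq : A *m A - (trQ2 A / d%:R) *: 1%:M \in sym_tracefree.
  apply/sym_tracefreeP; split.
    by rewrite linearB linearZ /= trmx_mul AT tr_scalar_mx.
  by rewrite raddfB /= mxtraceZ mxtrace1 divfK // /trQ2 subrr.
by rewrite /PQ /fQ rpredZ // rpredD ?rpredB ?rpredZ.
Qed.

End Frobenius.

Arguments sym_tracefree {R d}.
Arguments scalar_sympart {R d}.

Section Mesh.
Variables (R : realType) (d : nat).
Variables (N E : finType) (coord : N -> 'rV[R]_d) (vert : E -> 'I_d.+1 -> N).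
Local Notation dW := (dW coord vert).
Local Notation ipS := (ipS coord vert).
Local Notation ipT := (ipT coord vert).
Local Notation nrmS2 := (nrmS2 coord vert).
Local Notation nrmT2 := (nrmT2 coord vert).
Local Notation ipgrad := (ipgrad coord vert).
Local Notation alpha_ip := (alpha_ip coord vert).
Local Notation divnorm2 := (divnorm2 coord vert).
Local Notation vol := (vol coord vert).
Local Notation gam := (gam coord vert).
Implicit Types U V W S X P : N -> 'M[R]_d.

Lemma dW_lincomb W W1 W2 (c1 c2 : R) T a :
  (forall z, W z = c1 *: W1 z + c2 *: W2 z) ->
  dW W T a = c1 *: dW W1 T a + c2 *: dW W2 T a.
Proof.
move=> WE; rewrite /Defs.dW !scaler_sumr -big_split /=; apply: eq_bigr => j _.
by rewrite WE scalerDr !scalerA (mulrC c1) (mulrC c2).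
Qed.

Lemma dW_closed (S : submodClosed 'M[R]_d) W T a :
  (forall z, W z \in S) -> dW W T a \in S.
Proof. by move=> WS; apply: rpred_sum => j _; apply: rpredZ. Qed.

Lemma vol_ge0 T : 0 <= vol T.
Proof. by rewrite /vol divr_ge0 ?normr_ge0 ?ler0n. Qed.

Lemma gam_gt0 z : triangulation coord vert -> 0 < gam z.
Proof.
case=> _ det_neq0 cover; have [T [j zE]] := cover z.
have zT : z \in verts vert T by rewrite -zE; apply/imsetP; exists j.
rewrite /gam (bigD1 T) //= ltr_wpDr ?sumr_ge0 // => [T' _|].
  by rewrite divr_ge0 ?vol_ge0.
by rewrite divr_gt0 // /vol divr_gt0 ?normr_gt0 ?ltr0n ?fact_gt0.
Qed.

Lemma nrmS2_ge0 W : 0 <= nrmS2 W.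
Proof.
apply: sumr_ge0 => z _; rewrite mulr_ge0 ?frob_ge0 //.
by apply: sumr_ge0 => T _; rewrite divr_ge0 ?vol_ge0.
Qed.

Lemma nrmS2_eq0 W z : triangulation coord vert ->
  nrmS2 W = 0 -> inode vert z -> W z = 0.
Proof.
move=> tri W0 zi; apply: frob_eq0; apply/eqP.
have gam_frob_ge0 w : 0 <= gam w * frob (W w) (W w).
  by rewrite mulr_ge0 ?frob_ge0 // ltW ?gam_gt0.
have /eqP := psumr_eq0P (fun w _ => gam_frob_ge0 w) W0 zi.
by rewrite mulf_eq0 gt_eqF ?gam_gt0.
Qed.

Lemma ipgrad_ge0 W : 0 <= ipgrad W W.
Proof.
apply: sumr_ge0 => T _; rewrite mulr_ge0 ?vol_ge0 //.
by apply: sumr_ge0 => a _; apply: frob_ge0.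
Qed.

Lemma ipS_scalar_sympart W S X (k : R) :
  (forall z, S z \in sym_tracefree) -> (forall z, X z \in scalar_sympart) ->
  (forall z, W z = S z + k *: X z) -> ipS W X = k * nrmS2 X.
Proof.
move=> Sst Xsc WE; rewrite mulr_sumr; apply: eq_bigr => z _.
by rewrite WE frobDl frobZl frob_sym_tracefree_scalar_sympart // add0r mulrCA.
Qed.

Lemma ipgrad_scalar_sympart W S X (k : R) :
  (forall z, S z \in sym_tracefree) -> (forall z, X z \in scalar_sympart) ->
  (forall z, W z = S z + k *: X z) -> ipgrad W X = k * ipgrad X X.
Proof.
move=> Sst Xsc WE; rewrite mulr_sumr; apply: eq_bigr => T _.
rewrite mulrCA [k * _]mulr_sumr; congr (_ * _); apply: eq_bigr => a _.
rewrite (@dW_lincomb W S X 1 k) => [|z]; last by rewrite scale1r.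
rewrite scale1r frobDl frobZl.
by rewrite frob_sym_tracefree_scalar_sympart ?add0r // dW_closed.
Qed.

Lemma ipS_diff_quotient U (k : R) : k != 0 ->
  ipS (fun z => k^-1 *: U z) U = k * nrmS2 (fun z => k^-1 *: U z).
Proof.
move=> k0; rewrite mulr_sumr; apply: eq_bigr => z _.
by rewrite frobZl !frobZr frobZl; field.
Qed.

Lemma ipS_second_difference U V (k : R) : k != 0 ->
  ipS (fun z => k^-1 *: (k^-1 *: U z - V z)) U =
  2^-1 * (nrmS2 (fun z => k^-1 *: U z) - nrmS2 V
          + nrmS2 (fun z => k^-1 *: U z - V z)).
Proof.
move=> k0; rewrite -sumrB -big_split mulr_sumr /=; apply: eq_bigr => z _.
by rewrite frob_second_difference //; ring.
Qed.

Lemma ipgrad_avg_diff U V :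
  ipgrad (fun z => 2^-1 *: (U z + V z)) (fun z => U z - V z) =
  2^-1 * (ipgrad U U - ipgrad V V).
Proof.
rewrite -sumrB mulr_sumr; apply: eq_bigr => T _.
rewrite -mulrBr mulrCA -sumrB [2^-1 * _]mulr_sumr; congr (_ * _).
apply: eq_bigr => a _.
rewrite (@dW_lincomb (fun z => 2^-1 *: (U z + V z)) U V 2^-1 2^-1) => [|z]; last first.
  by rewrite scalerDr.
rewrite (@dW_lincomb (fun z => U z - V z) U V 1 (-1)) => [|z]; last first.
  by rewrite scale1r scaleN1r.
by rewrite scale1r scaleN1r -scalerDr frob_avg_diff.
Qed.

Lemma ipS_scale_ipT (w : N -> R) P V :
  ipS (fun z => w z *: P z) V = ipT (fun z => frob (P z) (V z)) w.
Proof. by apply: eq_bigr => z _; rewrite frobZl [w z * _]mulrC. Qed.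

Lemma ipT_avg_diff (u v : N -> R) :
  ipT (fun z => u z - v z) (fun z => (u z + v z) / 2) = 2^-1 * (nrmT2 u - nrmT2 v).
Proof.
rewrite -sumrB mulr_sumr; apply: eq_bigr => z _; ring.
Qed.

Definition divW W T (j : 'I_d) : R := \sum_(k < d) dW W T k j k.

Lemma divW_sub U V T j :
  divW (fun z => U z - V z) T j = divW U T j - divW V T j.
Proof.
rewrite /divW -sumrB; apply: eq_bigr => k _.
rewrite (@dW_lincomb (fun z => U z - V z) U V 1 (-1)) => [|z]; last first.
  by rewrite scale1r scaleN1r.
by rewrite !mxE; ring.
Qed.

Lemma alpha_ipE W1 W2 : alpha_ip W1 W2 = \sum_T vol T *
  (- \sum_(j < d) divW W1 T j * (\sum_(i < d) dW W2 T i i j + divW W2 T j)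
   + 2 / d%:R * \sum_(k < d) divW W1 T k * \tr (dW W2 T k)).
Proof.
rewrite /alpha_ip; apply: eq_bigr => T _; congr (_ * (- _ + _ * _)).
- under eq_bigr do under eq_bigr do rewrite big_split /=.
  under eq_bigr do rewrite big_split /=.
  rewrite big_split /=.
  under [X in _ = X]eq_bigr do rewrite mulrDr.
  rewrite big_split /=; congr (_ + _).
  + rewrite exchange_big /=; apply: eq_bigr => j _; rewrite mulr_sumr.
    apply: eq_bigr => i _; rewrite /divW mulr_suml; apply: eq_bigr => k _; ring.
  + apply: eq_bigr => i _; rewrite /divW mulr_sumr.
    apply: eq_bigr => j _; rewrite mulr_suml; apply: eq_bigr => k _; ring.
- have diag i : \sum_(j < d) \sum_(k < d) \sum_(l < d)
      dW W1 T l k l * dW W2 T k i j * (i == j)%:R =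
      \sum_(k < d) \sum_(l < d) dW W1 T l k l * dW W2 T k i i.
    rewrite (bigD1 i) //= [X in _ + X]big1 ?addr0 => [|j /negbTE ji].
      by apply: eq_bigr => k _; apply: eq_bigr => l _; rewrite eqxx mulr1.
    by rewrite eq_sym ji; apply: big1 => k _; apply: big1 => l _; rewrite mulr0.
  under eq_bigr => i _ do rewrite diag.
  rewrite exchange_big /=; apply: eq_bigr => k _.
  rewrite [LHS]exchange_big /= /divW /mxtrace mulr_suml; apply: eq_bigr => l _.
  by rewrite mulr_sumr; apply: eq_bigr => i _; ring.
Qed.

Lemma alpha_ip_sym_tracefree W1 W2 : (forall z, W2 z \in sym_tracefree) ->
  alpha_ip W1 W2 = -2 * \sum_T vol T * \sum_(j < d) divW W1 T j * divW W2 T j.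
Proof.
move=> W2st; rewrite alpha_ipE mulr_sumr; apply: eq_bigr => T _.
have dWst k : dW W2 T k \in sym_tracefree := dW_closed T k W2st.
have dWT k : (dW W2 T k)^T = dW W2 T k by case/sym_tracefreeP: (dWst k).
have dWtr k : \tr (dW W2 T k) = 0 by case/sym_tracefreeP: (dWst k).
rewrite [X in 2 / _ * X]big1 => [|k _]; last by rewrite dWtr mulr0.
rewrite mulr0 addr0 mulrCA; congr (_ * _); rewrite -sumrN mulr_sumr.
apply: eq_bigr => j _.
have -> : \sum_(i < d) dW W2 T i i j = divW W2 T j.
  by apply: eq_bigr => i _; rewrite -[in RHS]dWT mxE.
ring.
Qed.

Lemma alpha_ip_scalar_sympart W1 W2 : (0 < d)%N ->
  (forall z, W2 z \in scalar_sympart) -> alpha_ip W1 W2 = 0.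
Proof.
move=> d_gt0 W2sc; rewrite alpha_ipE; apply: big1 => T _.
have dWsym k : dW W2 T k + (dW W2 T k)^T = (2 * \tr (dW W2 T k) / d%:R) *: 1%:M.
  by apply/eqP; exact: (dW_closed T k W2sc).
have sympart_sum j : \sum_(i < d) dW W2 T i i j + divW W2 T j =
    2 * \tr (dW W2 T j) / d%:R.
  rewrite /divW -big_split /= (bigD1 j) //= big1 ?addr0 => [|i ij].
    by have := congr1 (fun M : 'M[R]_d => M j j) (dWsym j); rewrite !mxE eqxx mulr1.
  have := congr1 (fun M : 'M[R]_d => M j i) (dWsym i).
  by rewrite !mxE eq_sym (negbTE ij) mulr0 addrC.
under eq_bigr do rewrite sympart_sum.
rewrite mulr_sumr -sumrN -big_split /= big1 ?mulr0 // => k _.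
by field; rewrite pnatr_eq0 -lt0n.
Qed.

Lemma alpha_ip_avg_diff U V : (forall z, U z - V z \in sym_tracefree) ->
  alpha_ip U (fun z => U z - V z) + alpha_ip V (fun z => U z - V z) =
  -2 * (divnorm2 U - divnorm2 V).
Proof.
move=> UVst; rewrite !alpha_ip_sym_tracefree // -mulrDr; congr (_ * _).
rewrite -big_split -sumrB; apply: eq_bigr => T _ /=.
rewrite -mulrDr -mulrBr; congr (_ * _).
rewrite -big_split -sumrB; apply: eq_bigr => j _ /=.
by rewrite divW_sub /divW; ring.
Qed.

End Mesh.

Section CrankNicolsonStep.
Variables (R : realType) (d : nat).
Variables (N E : finType) (coord : N -> 'rV[R]_d) (vert : E -> 'I_d.+1 -> N).
Variables (L1 L2 L3 sigma dt : R) (Qm Q0 Q1 P : N -> 'M[R]_d) (r0 r1 : N -> R).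
Local Notation ipS := (ipS coord vert).
Local Notation ipT := (ipT coord vert).
Local Notation nrmS2 := (nrmS2 coord vert).
Local Notation nrmT2 := (nrmT2 coord vert).
Local Notation ipgrad := (ipgrad coord vert).
Local Notation alpha_ip := (alpha_ip coord vert).
Local Notation divnorm2 := (divnorm2 coord vert).

Definition discrete_energy (Qprev Qcur : N -> 'M[R]_d) (rcur : N -> R) : R :=
    sigma / 2 * nrmS2 (fun z => dt^-1 *: (Qcur z - Qprev z))
  + L1 / 2 * ipgrad Qcur Qcur
  + (L2 + L3) / 2 * divnorm2 Qcur
  + 1 / 2 * nrmT2 rcur.

Hypotheses (d_gt0 : (0 < d)%N) (tri : triangulation coord vert).
Hypotheses (L1_ge0 : 0 <= L1) (sigma_ge0 : 0 <= sigma) (dt_gt0 : 0 < dt).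
Hypotheses (Q0_Sh : in_Sh vert Q0) (Q1_Sh : in_Sh vert Q1).
Hypotheses (r0_Th : in_Th vert r0) (r1_Th : in_Th vert r1).
Hypotheses (Qm_st : forall z, Qm z \in sym_tracefree)
           (Q0_st : forall z, Q0 z \in sym_tracefree)
           (P_st : forall z, P z \in sym_tracefree).

Let DQ0 z := dt^-1 *: (Q1 z - Q0 z).
Let DQm z := dt^-1 *: (Q0 z - Qm z).

Hypothesis scheme_Q : forall Phi, in_Sh vert Phi ->
  ipS DQ0 Phi =
    - sigma * ipS (fun z => dt^-1 *: (DQ0 z - DQm z)) Phi
    - L1 * ipgrad (fun z => 2^-1 *: (Q1 z + Q0 z)) Phi
    + (L2 + L3) / 2 * (2^-1 * (alpha_ip Q1 Phi + alpha_ip Q0 Phi))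
    - ipS (fun z => ((r1 z + r0 z) / 2) *: P z) Phi.

Hypothesis scheme_r : forall psi, in_Th vert psi ->
  ipT (fun z => r1 z - r0 z) psi = ipT (fun z => frob (P z) (Q1 z - Q0 z)) psi.

Lemma DQm_sym_tracefree z : DQm z \in sym_tracefree.
Proof. by rewrite rpredZ ?rpredB. Qed.

Lemma scheme_sym_tracefree z : Q1 z \in sym_tracefree.
Proof.
pose Y z := sym_tracefree_part (Q1 z); pose X z := Q1 z - Y z.
have Yst w : Y w \in sym_tracefree by apply: sym_tracefree_part_sym_tracefree.
have Xsc w : X w \in scalar_sympart by apply: sub_sym_tracefree_part_scalar_sympart.
have X_Sh : in_Sh vert X.
  by move=> w bw; rewrite /X /Y Q1_Sh // sym_tracefree_part0 subr0.
have Q1E w : Q1 w = Y w + X w by rewrite addrC subrK.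
have DQ0E w : DQ0 w = dt^-1 *: (Y w - Q0 w) + dt^-1 *: X w.
  by rewrite /DQ0 Q1E; apply/matrixP => i j; rewrite !mxE; ring.
have D2E w : dt^-1 *: (DQ0 w - DQm w) =
    dt^-1 *: (dt^-1 *: (Y w - Q0 w) - DQm w) + (dt^-1 * dt^-1) *: X w.
  by rewrite DQ0E; apply/matrixP => i j; rewrite !mxE; ring.
have avgE w : 2^-1 *: (Q1 w + Q0 w) = 2^-1 *: (Y w + Q0 w) + 2^-1 *: X w.
  by rewrite Q1E; apply/matrixP => i j; rewrite !mxE; ring.
have bulkE w :
    ((r1 w + r0 w) / 2) *: P w = ((r1 w + r0 w) / 2) *: P w + 0 *: X w.
  by rewrite scale0r addr0.
have := scheme_Q X_Sh.
rewrite (ipS_scalar_sympart coord vert _ Xsc DQ0E); last first.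
  by move=> w; apply/rpredZ/rpredB; [apply: Yst | apply: Q0_st].
rewrite (ipS_scalar_sympart coord vert _ Xsc D2E); last first.
  move=> w; apply/rpredZ/rpredB; last exact: DQm_sym_tracefree.
  by apply/rpredZ/rpredB; [apply: Yst | apply: Q0_st].
rewrite (ipgrad_scalar_sympart coord vert _ Xsc avgE); last first.
  by move=> w; apply/rpredZ/rpredD; [apply: Yst | apply: Q0_st].
rewrite (ipS_scalar_sympart coord vert _ Xsc bulkE); last first.
  by move=> w; apply/rpredZ/P_st.
rewrite !(alpha_ip_scalar_sympart _ _ _ d_gt0 Xsc) => eqX.
have X0 : nrmS2 X = 0.
  have dt1_gt0 : 0 < dt^-1 by rewrite invr_gt0.
  have : dt^-1 * nrmS2 X +
      (sigma * (dt^-1 * dt^-1 * nrmS2 X) + L1 * (2^-1 * ipgrad X X)) = 0 by lra.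
  move/eqP; rewrite paddr_eq0 ?addr_ge0 ?mulr_ge0 ?nrmS2_ge0 ?ipgrad_ge0
    ?invr_ge0 // ?ltW //.
  by case/andP; rewrite mulf_eq0 gt_eqF //= => /eqP.
case: (boolP (bnode vert z)) => [bz | iz]; first by rewrite Q1_Sh // rpred0.
by rewrite Q1E (nrmS2_eq0 tri X0 iz) addr0.
Qed.

Lemma scheme_energy_identity :
  discrete_energy Q0 Q1 r1 - discrete_energy Qm Q0 r0 =
  - dt * nrmS2 DQ0 - sigma / 2 * nrmS2 (fun z => DQ0 z - DQm z).
Proof.
have dt_neq0 : dt != 0 by rewrite gt_eqF.
have Phi_Sh : in_Sh vert (fun z => Q1 z - Q0 z).
  by move=> z bz; rewrite Q1_Sh ?Q0_Sh // subrr.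
have rbar_Th : in_Th vert (fun z => (r1 z + r0 z) / 2).
  by move=> z bz; rewrite r1_Th ?r0_Th // addr0 mul0r.
have Phi_st z : Q1 z - Q0 z \in sym_tracefree.
  by apply: rpredB; [apply: scheme_sym_tracefree | apply: Q0_st].
have rate_term : ipS DQ0 (fun z => Q1 z - Q0 z) = dt * nrmS2 DQ0.
  exact: ipS_diff_quotient.
have inertia_term : ipS (fun z => dt^-1 *: (DQ0 z - DQm z)) (fun z => Q1 z - Q0 z) =
    2^-1 * (nrmS2 DQ0 - nrmS2 DQm + nrmS2 (fun z => DQ0 z - DQm z)).
  exact: ipS_second_difference.
have coupling_term : ipS (fun z => ((r1 z + r0 z) / 2) *: P z) (fun z => Q1 z - Q0 z) =
    2^-1 * (nrmT2 r1 - nrmT2 r0).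
  by rewrite ipS_scale_ipT -scheme_r // ipT_avg_diff.
have := scheme_Q Phi_Sh.
rewrite rate_term inertia_term ipgrad_avg_diff alpha_ip_avg_diff // coupling_term.
rewrite /discrete_energy -/DQ0 -/DQm.
lra.
Qed.

End CrankNicolsonStep.

Theorem theorem4p2 (R : realType) (d : nat)
  (L1 L2 L3 a b c sigma A0 dt : R)
  (N E : finType) (coord : N -> 'rV[R]_d) (vert : E -> 'I_d.+1 -> N)
  (Qm Q0 Q1 : N -> 'M[R]_d)   (* Q_h^{n-1}, Q_h^n, Q_h^{n+1} *)
  (r0 r1 : N -> R) :          (* r_h^n, r_h^{n+1} *)
  (d = 2 \/ d = 3)%N ->
  0 < L1 -> 0 <= L2 + L3 -> 0 < c -> 0 < sigma -> 0 < dt ->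
  (forall Q : 'M[R]_d, Q^T = Q -> \tr Q = 0 -> 0 < bulk a b c A0 Q) ->
  triangulation coord vert ->
  in_Sh vert Qm -> in_Sh vert Q0 -> in_Sh vert Q1 ->
  in_Th vert r0 -> in_Th vert r1 ->
  (forall z, (Qm z)^T = Qm z /\ \tr (Qm z) = 0) ->
  (forall z, (Q0 z)^T = Q0 z /\ \tr (Q0 z) = 0) ->
  let ipS := ipS coord vert in
  let ipT := ipT coord vert in
  let DQ0 := fun z => dt^-1 *: (Q1 z - Q0 z) in   (* D_t^+ Q_h^n *)
  let DQm := fun z => dt^-1 *: (Q0 z - Qm z) in   (* D_t^+ Q_h^{n-1} *)
  let PQ0 := fun z => PQ a b c A0 (Q0 z) in       (* P(Q_h^n) *)
  (* first equation of the scheme *)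
  (forall Phi : N -> 'M[R]_d, in_Sh vert Phi ->
     ipS DQ0 Phi =
       - sigma * ipS (fun z => dt^-1 *: (DQ0 z - DQm z)) Phi
       - L1 * ipgrad coord vert (fun z => 2^-1 *: (Q1 z + Q0 z)) Phi
       + (L2 + L3) / 2 *
           (2^-1 * (alpha_ip coord vert Q1 Phi + alpha_ip coord vert Q0 Phi))
       - ipS (fun z => ((r1 z + r0 z) / 2) *: PQ0 z) Phi) ->
  (* second equation of the scheme *)
  (forall psi : N -> R, in_Th vert psi ->
     ipT (fun z => r1 z - r0 z) psi =
       ipT (fun z => frob (PQ0 z) (Q1 z - Q0 z)) psi) ->
  let energy := fun (Qprev Qcur : N -> 'M[R]_d) (rcur : N -> R) =>
      sigma / 2 * nrmS2 coord vert (fun z => dt^-1 *: (Qcur z - Qprev z))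
    + L1 / 2 * ipgrad coord vert Qcur Qcur
    + (L2 + L3) / 2 * divnorm2 coord vert Qcur
    + 1 / 2 * nrmT2 coord vert rcur in
  energy Q0 Q1 r1 - energy Qm Q0 r0 =
    - dt * nrmS2 coord vert DQ0
    - sigma / 2 * nrmS2 coord vert (fun z => DQ0 z - DQm z).
Proof.
(* The positivity of the bulk potential only makes r and P meaningful, and
   [PQ] is total. *)
move=> d23 L1_gt0 _ _ sigma_gt0 dt_gt0 _ tri _ Q0_Sh Q1_Sh r0_Th r1_Th Qm_st Q0_st
  ipS ipT DQ0 DQm PQ0 scheme_Q scheme_r energy.
have d_gt0 : (0 < d)%N by case: d23 => ->.
have st (Q : N -> 'M[R]_d) : (forall z, (Q z)^T = Q z /\ \tr (Q z) = 0) ->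
    forall z, Q z \in sym_tracefree.
  by move=> Qst z; apply/sym_tracefreeP.
have PQ0_st z : PQ0 z \in sym_tracefree by apply/PQ_sym_tracefree/st.
exact: (scheme_energy_identity d_gt0 tri (ltW L1_gt0) (ltW sigma_gt0) dt_gt0
  Q0_Sh Q1_Sh r0_Th r1_Th (st _ Qm_st) (st _ Q0_st) PQ0_st scheme_Q scheme_r).
Qed.
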